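(* Let $G=(V,E)$ be a finite connected graph satisfying CD$(F;0)$ for some CD-function $F$, with relaxation function $\varphi$. Let $u:[0,\infty)\times V\to(0,\infty)$ solve the heat equation on $G$. Then for all $0<t_1<t_2$ and $x_1,x_2\in V$, $$u(t_1,x_1)\le u(t_2,x_2)\exp\Big(\int_{t_1}^{t_2}\varphi(t)\,dt\Big)\exp\Big(\frac{2\mu_{max}\,d(x_1,x_2)^2}{w_{min}(t_2-t_1)}\Big),$$ where $\mu_{max}=\max_V\mu$, $w_{min}=\min_{xy\in E}w_{xy}$ and $d$ is the combinatorial graph distance.
   Context: Graphs are undirected and locally finite; $x\sim y$ means $xy\in E$; each edge has a weight $w_{xy}=w_{yx}>0$; $\mu:V\to(0,\infty)$. The Laplacian is $\Delta u(x)=\frac1{\mu(x)}\sum_{y\sim x}w_{xy}(u(y)-u(x))$ and $L:=-\Delta$. For $H:\mathbb R\to\mathbb R$, $\Psi_H(v)(x)=\frac1{\mu(x)}\sum_{y\sim x}w_{xy}H(v(y)-v(x))$; $\Upsilon(z)=e^z-1-z$. A CD-function is a continuous $F:[0,\infty)\to[0,\infty)$ with $F(0)=0$, $F(x)/x$ strictly increasing on $(0,\infty)$, $\int_1^\infty dr/F(r)<\infty$. Its relaxation function is the unique positive solution $\varphi$ on $(0,\infty)$ of $\dot\varphi+F(\varphi)=0$ with $\varphi(0+)=\infty$. $G$ satisfies CD$(F;0)$ if for every $x\in V$ and every $v:V\to\mathbb R$ with $Lv(x)>0$ and $Lv(x)\ge Lv(y)$ for all $y\sim x$, one has $\Delta\Psi_{\Upsilon'}(v)(x)\ge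 F(Lv(x))$. A solution of the heat equation is $u(t,x)$, $C^1$ in $t$, with $\partial_tu=\Delta u$ on $[0,\infty)\times V$. *)

From Stdlib Require Import Reals Lra List.
Import ListNotations.
Open Scope R_scope.

(* A finite weighted graph on a type V: [enum] lists every vertex exactly once,
   [w x y] is the edge weight, with x ~ y  iff  w x y > 0 (w = 0 off edges),
   [mu] the positive vertex measure. *)
Definition weighted_graph {V : Type} (enum : list V) (w : V -> V -> R) (mu : V -> R) : Prop :=
  NoDup enum /\ (forall x, In x enum) /\
  (forall x y, w x y = w y x) /\ (forall x y, 0 <= w x y) /\
  (forall x, w x x = 0) /\ (forall x, 0 < mu x).

Definition adj {V : Type} (w : V -> V -> R) (x y : V) : Prop := 0 < w x y.

Definition sumV {V : Type} (enum : list V) (f : V -> R) : R :=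
  fold_right (fun y acc => f y + acc) 0 enum.

Definition Lap {V : Type} (enum : list V) (w : V -> V -> R) (mu : V -> R)
  (u : V -> R) (x : V) : R :=
  / mu x * sumV enum (fun y => w x y * (u y - u x)).

Definition PsiH {V : Type} (enum : list V) (w : V -> V -> R) (mu : V -> R)
  (H : R -> R) (v : V -> R) (x : V) : R :=
  / mu x * sumV enum (fun y => w x y * H (v y - v x)).

Definition Upsilon (z : R) : R := exp z - 1 - z.
Definition Upsilon' (z : R) : R := exp z - 1.

Definition CD0 {V : Type} (enum : list V) (w : V -> V -> R) (mu : V -> R)
  (F : R -> R) : Prop :=
  forall (x : V) (v : V -> R),
    0 < - Lap enum w mu v x ->
    (forall y, adj w x y -> - Lap enum w mu v y <= - Lap enum w mu v x) ->
    F (- Lap enum w mu v x) <= Lap enum w mu (PsiH enum w mu Upsilon' v) x.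

Definition improper_integrable (f : R -> R) (a : R) : Prop :=
  (forall b, a <= b -> inhabited (Riemann_integrable f a b)) /\
  exists l : R, forall eps, 0 < eps -> exists M, forall b (pr : Riemann_integrable f a b),
      M <= b -> a <= b -> Rabs (RiemannInt pr - l) < eps.

(* CD-function (F only matters on [0,oo)) *)
Definition CD_function (F : R -> R) : Prop :=
  (forall x, 0 < x -> continuity_pt F x) /\
  (forall eps, 0 < eps -> exists delta, 0 < delta /\
      forall x, 0 <= x < delta -> Rabs (F x - F 0) < eps) /\
  F 0 = 0 /\
  (forall x, 0 <= x -> 0 <= F x) /\
  (forall x y, 0 < x -> x < y -> F x / x < F y / y) /\
  improper_integrable (fun r => / F r) 1.

Definition relaxation_function (F phi : R -> R) : Prop :=
  (forall t, 0 < t -> 0 < phi t) /\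
  (forall t, 0 < t -> derivable_pt_lim phi t (- F (phi t))) /\
  (forall M, exists delta, 0 < delta /\ forall t, 0 < t < delta -> M < phi t).

Definition heat_solution {V : Type} (enum : list V) (w : V -> V -> R) (mu : V -> R)
  (u : R -> V -> R) : Prop :=
  (forall x t, 0 < t -> derivable_pt_lim (fun s => u s x) t (Lap enum w mu (u t) x)) /\
  (forall x eps, 0 < eps -> exists delta, 0 < delta /\ forall h, 0 < h < delta ->
      Rabs ((u h x - u 0 x) / h - Lap enum w mu (u 0) x) < eps).

Inductive walk {V : Type} (w : V -> V -> R) : V -> V -> nat -> Prop :=
| walk_nil : forall x, walk w x x 0
| walk_cons : forall x z y n, adj w x z -> walk w z y n -> walk w x y (S n).

Definition connected {V : Type} (w : V -> V -> R) : Prop :=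
  forall x y : V, exists n, walk w x y n.

Definition is_dist {V : Type} (w : V -> V -> R) (x y : V) (n : nat) : Prop :=
  walk w x y n /\ forall m, walk w x y m -> (n <= m)%nat.

(* mu_max = max_V mu  (V nonempty, mu > 0) *)
Definition mu_max {V : Type} (enum : list V) (mu : V -> R) : R :=
  fold_right (fun x m => Rmax (mu x) m) 0 enum.

(* w_min = min over edges of w_xy (dummy value 1 if there are no edges) *)
Definition edge_weights {V : Type} (enum : list V) (w : V -> V -> R) : list R :=
  flat_map (fun x => flat_map (fun y =>
     if Rlt_dec 0 (w x y) then [w x y] else []) enum) enum.

Definition w_min {V : Type} (enum : list V) (w : V -> V -> R) : R :=
  match edge_weights enum w with
  | [] => 1
  | a :: l => fold_right Rmin a l
  end.

(* With v = log u the heat equation reads  d/dt v = Psi_{Upsilon'}(v) = Delta v + (1/mu) sum w Upsilon(dv).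
   Li-Yau: -Delta v(t,.) <= phi(t).  At the first time where -Delta v(.,x) touches phi(./lambda),
   lambda > 1, the difference has nonnegative time derivative, whereas CD(F;0) at x makes it
   at most F(phi) (1/lambda - 1) < 0.
   Hence G(t,x) = v(t,x) + int_1^t phi is nondecreasing in t and, across an edge xz,
   d/dt G(t,z) >= (w_min/mu_max) Upsilon(G(t,x) - G(t,z)); so h(t) = G(a,x) - G(t,z) satisfies
   h' <= -(w_min/(2 mu_max)) h^2, giving G(a,x) - G(b,z) <= 2 mu_max/(w_min (b-a)).
   Cutting [t1,t2] into d equal pieces along a geodesic yields 2 mu_max d^2/(w_min (t2-t1)). *)
From Stdlib Require Import Reals List Lra Lia Classical.
From Coquelicot Require Import Coquelicot.
Open Scope R_scope.

(** * Real analysis *)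

Lemma continuity_pt_locally (f : R -> R) t : continuity_pt f t ->
  forall eps, 0 < eps ->
  exists d, 0 < d /\ forall h, Rabs h < d -> Rabs (f (t + h) - f t) < eps.
Proof.
  intros Hc eps He. destruct (Hc eps He) as [a [Ha H]]. exists a; split; [lra|].
  intros h Hh. destruct (Req_dec h 0) as [->|Hn].
  - rewrite Rplus_0_r, Rminus_diag, Rabs_R0; lra.
  - apply (H (t + h)). split.
    + split; [exact I| intro E; apply Hn; lra].
    + simpl. unfold R_dist. replace (t + h - t) with h by ring. exact Hh.
Qed.

Lemma derivable_pt_lim_continuity_pt (f : R -> R) t l :
  derivable_pt_lim f t l -> continuity_pt f t.
Proof. intros H. apply derivable_continuous_pt. exists l. exact H. Qed.

Lemma right_derivative_continuity_pt (f : R -> R) L :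
  (forall eps, 0 < eps -> exists d, 0 < d /\
     forall h, 0 < h < d -> Rabs ((f h - f 0) / h - L) < eps) ->
  continuity_pt (fun s => f (Rmax 0 s)) 0.
Proof.
  intros Hf eps He.
  destruct (Hf 1 Rlt_0_1) as [d [Hd Hq]].
  assert (HL : 0 < Rabs L + 1) by (pose proof (Rabs_pos L); lra).
  set (d' := Rmin d (eps / (Rabs L + 1))).
  assert (Hd'1 : d' <= d) by apply Rmin_l.
  assert (Hd'2 : d' <= eps / (Rabs L + 1)) by apply Rmin_r.
  exists d'. split. { apply Rmin_glb_lt; [lra| apply Rdiv_lt_0_compat; lra]. }
  intros s [_ Hs]. simpl in *. unfold R_dist in *.
  rewrite Rminus_0_r in Hs. rewrite (Rmax_left 0 0) by lra.
  destruct (Rle_dec s 0) as [Hs0|Hs0].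
  - rewrite Rmax_left, Rminus_diag, Rabs_R0 by lra; lra.
  - rewrite Rmax_right by lra. rewrite Rabs_right in Hs by lra.
    specialize (Hq s ltac:(lra)).
    assert (Hslope : Rabs ((f s - f 0) / s) < Rabs L + 1).
    { pose proof (Rabs_triang ((f s - f 0) / s - L) L).
      replace ((f s - f 0) / s - L + L) with ((f s - f 0) / s) in * by ring. lra. }
    replace (f s - f 0) with (s * ((f s - f 0) / s)) by (field; lra).
    rewrite Rabs_mult, (Rabs_right s) by lra.
    assert (Hs' : s * (Rabs L + 1) < eps).
    { apply Rmult_lt_reg_r with (/ (Rabs L + 1)); [apply Rinv_0_lt_compat; lra|].
      rewrite Rmult_assoc, Rinv_r by lra. unfold Rdiv in Hd'2. lra. }
    apply Rle_lt_trans with (s * (Rabs L + 1)); [|exact Hs'].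
    apply Rmult_le_compat_l; lra.
Qed.

Lemma continuity_pt_le0_left (f : R -> R) m : 0 < m -> continuity_pt f m ->
  (forall t, 0 < t < m -> f t < 0) -> f m <= 0.
Proof.
  intros Hm Hc Hbelow. apply Rnot_lt_le. intro Hp.
  destruct (continuity_pt_locally _ _ Hc _ Hp) as [d [Hd H]].
  assert (0 < Rmin d m) by (apply Rmin_glb_lt; lra).
  pose proof (Rmin_l d m); pose proof (Rmin_r d m).
  set (h := - Rmin d m / 2).
  specialize (H h ltac:(unfold h; rewrite Rabs_left; lra)).
  specialize (Hbelow (m + h) ltac:(unfold h; lra)).
  apply Rabs_def2 in H. lra.
Qed.

Lemma derivable_pt_lim_ge0_left (k : R -> R) t l d :
  derivable_pt_lim k t l -> 0 < d ->
  (forall s, t - d < s < t -> k s < k t) -> 0 <= l.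
Proof.
  intros Hk Hd Hs. destruct (Rle_lt_dec 0 l) as [|Hl]; [assumption|].
  destruct (Hk (- l / 2)) as [del Hdel]; [lra|].
  assert (Hm : 0 < Rmin del d) by (apply Rmin_glb_lt; [apply cond_pos| exact Hd]).
  pose proof (Rmin_l del d); pose proof (Rmin_r del d).
  set (h := - Rmin del d / 2).
  assert (Hh : Rabs h < del) by (unfold h; rewrite Rabs_left; lra).
  specialize (Hdel h ltac:(unfold h; lra) Hh).
  assert (Hdrop : k (t + h) < k t) by (apply Hs; unfold h; lra).
  assert (Hq : 0 < (k (t + h) - k t) / h).
  { replace ((k (t + h) - k t) / h) with ((k t - k (t + h)) / (- h)) by (field; unfold h; lra).
    apply Rdiv_lt_0_compat; unfold h in *; lra. }
  apply Rabs_def2 in Hdel. lra.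
Qed.

Lemma nondecreasing_derive_ge0 (f f' : R -> R) a b :
  a <= b -> (forall c, a <= c <= b -> derivable_pt_lim f c (f' c)) ->
  (forall c, a <= c <= b -> 0 <= f' c) -> f a <= f b.
Proof.
  intros Hab Hd Hp. destruct (Req_dec a b) as [->|Hne]; [lra|].
  destruct (MVT_cor2 f f' a b) as [c [Hc1 Hc2]]; [lra|exact Hd|].
  specialize (Hp c ltac:(lra)). nra.
Qed.

(* 1/h grows at rate at least k while h stays positive. *)
Lemma riccati_decay (h h' : R -> R) k a b :
  0 < k -> a < b ->
  (forall s, a <= s <= b -> derivable_pt_lim h s (h' s)) ->
  (forall s, a <= s <= b -> h' s <= 0) ->
  (forall s, a <= s <= b -> 0 < h s -> k * h s ^ 2 <= - h' s) ->
  h b <= / (k * (b - a)).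
Proof.
  intros Hk Hab Hd Hdec Hric.
  assert (Hkab : 0 < k * (b - a)) by (apply Rmult_lt_0_compat; lra).
  destruct (Rle_lt_dec (h b) 0) as [Hb|Hb].
  { pose proof (Rinv_0_lt_compat _ Hkab); lra. }
  assert (Hpos : forall s, a <= s <= b -> 0 < h s).
  { intros s Hs. enough (h b <= h s) by lra.
    enough ((fun r => - h r) s <= (fun r => - h r) b) by (cbv beta in *; lra).
    apply (nondecreasing_derive_ge0 (fun r => - h r) (fun r => - h' r)); [lra| |].
    - intros c Hc. apply derivable_pt_lim_opp, Hd. lra.
    - intros c Hc. pose proof (Hdec c ltac:(lra)). lra. }
  assert (Hinv : (fun s => / h s - k * s) a <= (fun s => / h s - k * s) b).
  { apply (nondecreasing_derive_ge0 (fun s => / h s - k * s) (fun s => - h' s / h s ^ 2 - k));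
      [lra| |].
    - intros c Hc. apply is_derive_Reals.
      apply (is_derive_minus (fun s => / h s) (fun s => k * s)).
      + apply is_derive_inv; [apply is_derive_Reals, Hd; exact Hc|].
        pose proof (Hpos c Hc); lra.
      + auto_derive; [exact I| ring].
    - intros c Hc. pose proof (Hpos c Hc) as Hh. pose proof (Hric c Hc Hh).
      assert (Hh2 : 0 < h c ^ 2) by (apply pow_lt; exact Hh).
      enough (k <= - h' c / h c ^ 2) by lra.
      apply Rmult_le_reg_r with (h c ^ 2); [exact Hh2|].
      unfold Rdiv. rewrite Rmult_assoc, Rinv_l by lra. lra. }
  simpl in Hinv. pose proof (Rinv_0_lt_compat _ (Hpos a ltac:(lra))).
  rewrite <- (Rinv_inv (h b)).
  apply Rinv_le_contravar; [exact Hkab| lra].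
Qed.

Lemma Upsilon_ge0 z : 0 <= Upsilon z.
Proof. unfold Upsilon; pose proof (exp_ineq1_le z); lra. Qed.

Lemma Upsilon_le a b : 0 <= a -> a <= b -> Upsilon a <= Upsilon b.
Proof.
  intros Ha Hab. apply (nondecreasing_derive_ge0 Upsilon Upsilon'); [exact Hab| |].
  - intros c _. apply is_derive_Reals. unfold Upsilon, Upsilon'. auto_derive; [exact I| ring].
  - intros c Hc. unfold Upsilon'. pose proof (exp_ineq1_le c); lra.
Qed.

Lemma sqr_half_le_Upsilon z : 0 <= z -> z ^ 2 / 2 <= Upsilon z.
Proof.
  intros Hz.
  assert (H : (fun h => Upsilon h - h ^ 2 / 2) 0 <= (fun h => Upsilon h - h ^ 2 / 2) z).
  { apply (nondecreasing_derive_ge0 (fun h => Upsilon h - h ^ 2 / 2) (fun c => Upsilon' c - c));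
      [exact Hz| |].
    - intros c _. apply is_derive_Reals. unfold Upsilon, Upsilon'.
      auto_derive; [exact I| field].
    - intros c _. unfold Upsilon'. pose proof (exp_ineq1_le c); lra. }
  simpl in H. unfold Upsilon in H |- *. rewrite exp_0 in H. lra.
Qed.

Lemma PsiH_Upsilon'E {V : Type} (enum : list V) w mu (v : V -> R) x :
  PsiH enum w mu Upsilon' v x =
  Lap enum w mu v x + / mu x * sumV enum (fun z => w x z * Upsilon (v z - v x)).
Proof.
  unfold PsiH, Lap, Upsilon', Upsilon. rewrite <- Rmult_plus_distr_l. f_equal.
  induction enum as [|y l IH]; simpl; [ring| rewrite IH; ring].
Qed.

(** * Finite sums, the Laplacian and finite families *)

Section Sums.
Context {V : Type}.

Lemma sumV_ext (l : list V) f g : (forall y, f y = g y) -> sumV l f = sumV l g.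
Proof. intros H; induction l; simpl; [reflexivity| rewrite H, IHl; reflexivity]. Qed.

Lemma sumV_scal (l : list V) c f : sumV l (fun y => c * f y) = c * sumV l f.
Proof. induction l; simpl; [ring| rewrite IHl; ring]. Qed.

Lemma sumV_ge0 (l : list V) f : (forall y, 0 <= f y) -> 0 <= sumV l f.
Proof. intros H; induction l; simpl; [lra| specialize (H a); lra]. Qed.

Lemma sumV_ge_term (l : list V) f y :
  (forall y, 0 <= f y) -> In y l -> f y <= sumV l f.
Proof.
  intros H; induction l as [|a l IH]; simpl; [tauto|].
  intros [->|Hin].
  - pose proof (sumV_ge0 l f H); lra.
  - specialize (IH Hin); specialize (H a); lra.
Qed.

Lemma derivable_pt_lim_sumV (l : list V) (f : R -> V -> R) f' t :
  (forall y, derivable_pt_lim (fun s => f s y) t (f' y)) ->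
  derivable_pt_lim (fun s => sumV l (f s)) t (sumV l f').
Proof.
  intros H; induction l; simpl.
  - apply derivable_pt_lim_const.
  - apply (derivable_pt_lim_plus (fun s => f s a) (fun s => sumV l (f s))); auto.
Qed.

Lemma continuity_pt_sumV (l : list V) (f : R -> V -> R) t :
  (forall y, continuity_pt (fun s => f s y) t) ->
  continuity_pt (fun s => sumV l (f s)) t.
Proof.
  intros H; induction l; simpl.
  - apply continuity_pt_const; intros ? ?; reflexivity.
  - apply (continuity_pt_plus (fun s => f s a) (fun s => sumV l (f s))); auto.
Qed.

Lemma derivable_pt_lim_Lap enum w mu (v : R -> V -> R) v' t x :
  (forall y, derivable_pt_lim (fun s => v s y) t (v' y)) ->
  derivable_pt_lim (fun s => Lap enum w mu (v s) x) t (Lap enum w mu v' x).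
Proof.
  intros H. unfold Lap.
  apply (derivable_pt_lim_scal (fun s => sumV enum (fun y => w x y * (v s y - v s x)))).
  apply (derivable_pt_lim_sumV enum (fun s y => w x y * (v s y - v s x))). intros y.
  apply (derivable_pt_lim_scal (fun s => v s y - v s x)).
  apply (derivable_pt_lim_minus (fun s => v s y) (fun s => v s x)); apply H.
Qed.

Lemma continuity_pt_Lap enum w mu (v : R -> V -> R) t x :
  (forall y, continuity_pt (fun s => v s y) t) ->
  continuity_pt (fun s => Lap enum w mu (v s) x) t.
Proof.
  intros H. unfold Lap.
  apply (continuity_pt_scal (fun s => sumV enum (fun y => w x y * (v s y - v s x)))).
  apply (continuity_pt_sumV enum (fun s y => w x y * (v s y - v s x))). intros y.
  apply (continuity_pt_scal (fun s => v s y - v s x)).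
  apply (continuity_pt_minus (fun s => v s y) (fun s => v s x)); apply H.
Qed.

Lemma In_common_delta (l : list V) (Q : V -> R -> Prop) :
  (forall x, In x l -> exists d, 0 < d /\ forall r, r < d -> Q x r) ->
  exists d, 0 < d /\ forall x, In x l -> forall r, r < d -> Q x r.
Proof.
  induction l as [|a l IH]; intros H.
  - exists 1; split; [lra| intros x []].
  - destruct (H a (or_introl eq_refl)) as [d1 [Hd1 H1]].
    destruct IH as [d2 [Hd2 H2]]. { intros x Hx; apply H; right; exact Hx. }
    pose proof (Rmin_l d1 d2); pose proof (Rmin_r d1 d2).
    exists (Rmin d1 d2); split; [apply Rmin_glb_lt; assumption|].
    intros x [<-|Hx] r Hr; [apply H1| apply H2]; auto; lra.
Qed.

Lemma In_continuity_pt_lt0_right (l : list V) (f : V -> R -> R) m :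
  (forall i, In i l -> continuity_pt (f i) m) -> (forall i, In i l -> f i m < 0) ->
  exists d, 0 < d /\ forall i r, In i l -> 0 <= r < d -> f i (m + r) < 0.
Proof.
  intros Hc Hneg.
  destruct (In_common_delta l (fun i r => 0 <= r -> f i (m + r) < 0)) as [d [Hd H]].
  - intros i Hi. pose proof (Hneg i Hi) as Hfi.
    destruct (continuity_pt_locally _ _ (Hc i Hi) (- f i m) ltac:(lra)) as [d [Hd Hloc]].
    exists d; split; [exact Hd|]. intros r Hr Hr0.
    specialize (Hloc r ltac:(rewrite Rabs_right; lra)). apply Rabs_def2 in Hloc. lra.
  - exists d; split; [exact Hd|]. intros i r Hi Hr. apply H; [exact Hi| lra| lra].
Qed.

Lemma first_zero_crossing (l : list V) (f : V -> R -> R) T i0 :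
  (forall i s, In i l -> 0 < s -> continuity_pt (f i) s) ->
  (exists d, 0 < d /\ forall i t, In i l -> 0 < t < d -> f i t < 0) ->
  In i0 l -> 0 < T -> 0 <= f i0 T ->
  exists m j, 0 < m /\ In j l /\ f j m = 0 /\ (forall i, In i l -> f i m <= 0) /\
    (forall i t, In i l -> 0 < t < m -> f i t < 0).
Proof.
  intros Hc [d0 [Hd0 Hnear]] Hi0 HT HfT.
  set (E := fun s => 0 < s /\ forall t i, 0 < t <= s -> In i l -> f i t < 0).
  set (a := Rmin d0 T / 2).
  assert (Ha : 0 < a < d0 /\ a < T).
  { pose proof (Rmin_l d0 T); pose proof (Rmin_r d0 T).
    assert (0 < Rmin d0 T) by (apply Rmin_glb_lt; assumption). unfold a; lra. }
  assert (HEa : E a).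
  { split; [lra|]. intros t i Ht Hi. apply Hnear; [exact Hi| lra]. }
  destruct (completeness E) as [m [Hub Hlub]].
  { exists T. intros s [Hs HEs]. apply Rnot_lt_le. intro Hl.
    specialize (HEs T i0 ltac:(lra) Hi0). lra. }
  { exists a; exact HEa. }
  assert (Hm : a <= m) by (apply Hub; exact HEa).
  assert (Hbelow : forall i t, In i l -> 0 < t < m -> f i t < 0).
  { intros i t Hi Ht. destruct (classic (exists s, E s /\ t < s)) as [[s [[_ Hs] Hts]]|Hn].
    - apply Hs; [lra| exact Hi].
    - exfalso. enough (m <= t) by lra. apply Hlub. intros s Hs.
      apply Rnot_lt_le. intro Hl. apply Hn. exists s; split; assumption. }
  assert (Hle : forall i, In i l -> f i m <= 0).
  { intros i Hi. apply continuity_pt_le0_left; [lra| apply Hc; [exact Hi| lra]|].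
    intros t Ht. apply Hbelow; assumption. }
  assert (Hzero : exists j, In j l /\ 0 <= f j m).
  { apply NNPP. intro Hn.
    destruct (In_continuity_pt_lt0_right l f m) as [d [Hd H]].
    { intros i Hi. apply Hc; [exact Hi| lra]. }
    { intros i Hi. apply Rnot_le_lt. intro Hx. apply Hn. exists i; split; assumption. }
    assert (HE : E (m + d / 2)).
    { split; [lra|]. intros t i Ht Hi. destruct (Rlt_le_dec t m).
      - apply Hbelow; [exact Hi| lra].
      - replace t with (m + (t - m)) by ring. apply H; [exact Hi| lra]. }
    pose proof (Hub _ HE). lra. }
  destruct Hzero as [j [Hj Hfj]].
  exists m, j. repeat split; try lra; try assumption.
  pose proof (Hle j Hj); lra.
Qed.

End Sums.

(** * Walks and graph constants *)

Section Graphs.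
Context {V : Type}.

(* Cutting [a, b] into n equal pieces, one per edge, gives n * C n/(b - a). *)
Lemma walk_increment_bound (w : V -> V -> R) (g : R -> V -> R) C :
  (forall x a b, 0 < a <= b -> g a x <= g b x) ->
  (forall x z a b, adj w x z -> 0 < a < b -> g a x - g b z <= C / (b - a)) ->
  forall n x y, walk w x y n ->
  forall a b, 0 < a < b -> g a x - g b y <= C * INR n ^ 2 / (b - a).
Proof.
  intros Hmono Hedge n x y Hw.
  induction Hw as [x|x z y n Hadj Hw IH]; intros a b Hab.
  - pose proof (Hmono x a b ltac:(lra)).
    replace (C * INR 0 ^ 2 / (b - a)) with 0 by (simpl; field; lra). lra.
  - destruct n as [|n].
    + inversion Hw; subst.
      replace (C * INR 1 ^ 2 / (b - a)) with (C / (b - a)) by (simpl; field; lra).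
      apply Hedge; assumption.
    + set (N := INR (S n)) in *.
      assert (HN : 0 < N) by (unfold N; apply lt_0_INR; lia).
      set (a' := a + (b - a) / (N + 1)).
      assert (Ha'a : a' - a = (b - a) / (N + 1)) by (unfold a'; ring).
      assert (Hba' : b - a' = (b - a) * N / (N + 1)) by (unfold a'; field; lra).
      assert (Ha' : a < a' < b).
      { assert (0 < (b - a) / (N + 1)) by (apply Rdiv_lt_0_compat; lra).
        assert (0 < (b - a) * N / (N + 1))
          by (apply Rdiv_lt_0_compat; [apply Rmult_lt_0_compat|]; lra).
        lra. }
      pose proof (Hedge x z a a' Hadj ltac:(lra)) as H1.
      specialize (IH a' b ltac:(lra)).
      rewrite S_INR. fold N.
      replace (C * (N + 1) ^ 2 / (b - a)) with (C / (a' - a) + C * N ^ 2 / (b - a'))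
        by (rewrite Ha'a, Hba'; field; lra).
      lra.
Qed.


Lemma mu_le_mu_max (enum : list V) mu x : In x enum -> mu x <= mu_max enum mu.
Proof.
  induction enum as [|a l IH]; simpl; [tauto|]. intros [->|H].
  - apply Rmax_l.
  - eapply Rle_trans; [apply IH, H| apply Rmax_r].
Qed.

Lemma fold_Rmin_le a l x : In x (a :: l) -> fold_right Rmin a l <= x.
Proof.
  induction l as [|b l IH]; simpl.
  - intros [->|[]]; lra.
  - intros [->|[->|H]].
    + eapply Rle_trans; [apply Rmin_r| apply IH; left; reflexivity].
    + apply Rmin_l.
    + eapply Rle_trans; [apply Rmin_r| apply IH; right; exact H].
Qed.

Lemma fold_Rmin_gt0 a l :
  0 < a -> (forall x, In x l -> 0 < x) -> 0 < fold_right Rmin a l.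
Proof.
  intros Ha; induction l as [|b l IH]; simpl; intros H; [exact Ha|].
  apply Rmin_glb_lt; [apply H; left; reflexivity| apply IH; intros; apply H; right; assumption].
Qed.

Lemma in_edge_weights (enum : list V) w r :
  In r (edge_weights enum w) <->
  exists x y, In x enum /\ In y enum /\ 0 < w x y /\ r = w x y.
Proof.
  unfold edge_weights. rewrite in_flat_map. split.
  - intros [x [Hx Hr]]. rewrite in_flat_map in Hr. destruct Hr as [y [Hy Hr]].
    destruct (Rlt_dec 0 (w x y)); simpl in Hr; [|tauto].
    destruct Hr as [<-|[]]. exists x, y; auto.
  - intros [x [y [Hx [Hy [Hw ->]]]]]. exists x; split; [exact Hx|].
    rewrite in_flat_map. exists y; split; [exact Hy|].
    destruct (Rlt_dec 0 (w x y)); [left; reflexivity| lra].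
Qed.

Lemma w_min_gt0 (enum : list V) w : 0 < w_min enum w.
Proof.
  unfold w_min. destruct (edge_weights enum w) as [|r l] eqn:E; [lra|].
  assert (Hall : forall x, In x (r :: l) -> 0 < x).
  { intros x Hx. rewrite <- E in Hx. apply in_edge_weights in Hx.
    destruct Hx as [a [b [_ [_ [H ->]]]]]; exact H. }
  apply fold_Rmin_gt0; [apply Hall; left; reflexivity| intros; apply Hall; right; assumption].
Qed.

Lemma w_min_le (enum : list V) w x y :
  In x enum -> In y enum -> 0 < w x y -> w_min enum w <= w x y.
Proof.
  intros Hx Hy Hw. unfold w_min.
  assert (Hin : In (w x y) (edge_weights enum w)) by (apply in_edge_weights; eauto 6).
  destruct (edge_weights enum w); [destruct Hin| apply fold_Rmin_le; exact Hin].
Qed.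

End Graphs.

(** * Log of a positive heat solution *)

Section LogHeat.
Variables (V : Type) (enum : list V) (w : V -> V -> R) (mu : V -> R)
  (F phi : R -> R) (u : R -> V -> R).
Hypothesis Hg : weighted_graph enum w mu.
Hypothesis HF : CD_function F.
Hypothesis HCD : CD0 enum w mu F.
Hypothesis Hphi : relaxation_function F phi.
Hypothesis Hheat : heat_solution enum w mu u.
Hypothesis Hpos : forall t x, 0 <= t -> 0 < u t x.

Local Notation Delta := (Lap enum w mu).
Local Notation Psi := (PsiH enum w mu Upsilon').

Definition logu t y := ln (u t y).

Lemma mu_gt0 x : 0 < mu x.
Proof. destruct Hg as (_ & _ & _ & _ & _ & H); exact (H x). Qed.

Lemma w_ge0 x y : 0 <= w x y.
Proof. destruct Hg as (_ & _ & _ & H & _ & _); exact (H x y). Qed.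

Lemma in_enum x : In x enum.
Proof. destruct Hg as (_ & H & _ & _ & _ & _); exact (H x). Qed.

Lemma mu_max_gt0 (x : V) : 0 < mu_max enum mu.
Proof. apply Rlt_le_trans with (mu x); [apply mu_gt0| apply mu_le_mu_max, in_enum]. Qed.

Lemma F_gt0 y : 0 < y -> 0 < F y.
Proof.
  intros Hy. destruct HF as (_ & _ & _ & HF0 & HFslope & _).
  specialize (HFslope (y / 2) y ltac:(lra) ltac:(lra)).
  specialize (HF0 (y / 2) ltac:(lra)).
  assert (0 <= F (y / 2) / (y / 2)) by (apply Rdiv_le_0_compat; lra).
  replace (F y) with ((F y / y) * y) by (field; lra). nra.
Qed.

Lemma phi_continuity_pt t : 0 < t -> continuity_pt phi t.
Proof.
  intros Ht. destruct Hphi as (_ & Hd & _).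
  exact (derivable_pt_lim_continuity_pt _ _ _ (Hd t Ht)).
Qed.

Lemma derivable_pt_lim_phi_scaled lam t : 0 < lam -> 0 < t ->
  derivable_pt_lim (fun s => phi (s / lam)) t (- F (phi (t / lam)) / lam).
Proof.
  intros Hl Ht. destruct Hphi as (_ & Hd & _).
  assert (Hlin : derivable_pt_lim (fun s => s / lam) t (/ lam)).
  { apply is_derive_Reals. auto_derive; [exact I| field; lra]. }
  pose proof (derivable_pt_lim_comp _ phi t _ _ Hlin
    (Hd (t / lam) ltac:(apply Rdiv_lt_0_compat; lra))) as Hc.
  unfold comp in Hc. unfold Rdiv at 3. exact Hc.
Qed.

Lemma derivable_pt_lim_logu t y : 0 < t ->
  derivable_pt_lim (fun s => logu s y) t (Psi (logu t) y).
Proof.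
  intros Ht. destruct Hheat as [Hdu _].
  pose proof (derivable_pt_lim_comp (fun s => u s y) ln t _ _ (Hdu y t Ht)
    (derivable_pt_lim_ln _ (Hpos t y ltac:(lra)))) as Hc.
  unfold comp in Hc.
  replace (Psi (logu t) y) with (/ u t y * Delta (u t) y); [exact Hc|].
  unfold PsiH, Lap. rewrite <- !sumV_scal.
  apply sumV_ext. intros z. unfold Upsilon', logu.
  assert (Hy := Hpos t y ltac:(lra)). assert (Hz := Hpos t z ltac:(lra)).
  assert (Hratio : exp (ln (u t z) - ln (u t y)) = u t z / u t y).
  { unfold Rminus. rewrite exp_plus, exp_Ropp, !exp_ln by assumption. reflexivity. }
  rewrite Hratio. pose proof (mu_gt0 y). field. lra.
Qed.

Lemma li_yau_scaled_near0 lam : 1 < lam ->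
  exists d, 0 < d /\ forall x t, In x enum -> 0 < t < d -> - Delta (logu t) x < phi (t / lam).
Proof.
  intros Hlam.
  set (v := fun s y => ln (u (Rmax 0 s) y)).
  assert (Hv : forall y, continuity_pt (fun s => v s y) 0).
  { intros y. destruct Hheat as [_ Hright].
    apply (continuity_pt_comp (fun s => u (Rmax 0 s) y) ln).
    - apply (right_derivative_continuity_pt (fun s => u s y) (Delta (u 0) y)), Hright.
    - exact (derivable_pt_lim_continuity_pt _ _ _
        (derivable_pt_lim_ln _ (Hpos _ y (Rmax_l 0 0)))). }
  destruct (In_common_delta enum (fun x r => 0 < r -> - Delta (logu r) x < phi (r / lam)))
    as [d [Hd H]].
  - intros x _.
    pose proof (continuity_pt_Lap enum w mu v 0 x Hv) as HL.
    destruct (continuity_pt_locally _ _ HL 1 Rlt_0_1) as [d1 [Hd1 H1]].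
    destruct Hphi as (_ & _ & Hblow).
    destruct (Hblow (- Delta (v 0) x + 1)) as [d2 [Hd2 H2]].
    pose proof (Rmin_l d1 d2); pose proof (Rmin_r d1 d2).
    exists (Rmin d1 d2). split; [apply Rmin_glb_lt; assumption|].
    intros r Hr Hr0.
    specialize (H1 r ltac:(rewrite Rabs_right; lra)). rewrite Rplus_0_l in H1.
    assert (Hvr : v r = logu r)
      by (unfold v, logu; rewrite Rmax_right by lra; reflexivity).
    rewrite Hvr in H1. apply Rabs_def2 in H1.
    assert (Hq : 0 < r / lam < d2).
    { split; [apply Rdiv_lt_0_compat; lra|].
      apply Rle_lt_trans with r; [|lra].
      apply Rmult_le_reg_r with lam; [lra|].
      unfold Rdiv. rewrite Rmult_assoc, Rinv_l by lra. nra. }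
    specialize (H2 _ Hq). lra.
  - exists d; split; [exact Hd|]. intros x t Hx Ht. apply (H x Hx); lra.
Qed.

(* [lam > 1] makes the touching contradiction strict: F(phi)/lam < F(phi). *)
Lemma li_yau_scaled lam : 1 < lam ->
  forall t x, 0 < t -> - Delta (logu t) x < phi (t / lam).
Proof.
  intros Hlam. apply NNPP. intro Hc.
  destruct (not_all_ex_not _ _ Hc) as [T HT].
  destruct (not_all_ex_not _ _ HT) as [x0 Hx0].
  apply imply_to_and in Hx0. destruct Hx0 as [HT0 Hx0]. apply Rnot_lt_le in Hx0.
  set (f := fun x s => - Delta (logu s) x - phi (s / lam)).
  set (f' := fun x s => - Delta (Psi (logu s)) x + F (phi (s / lam)) / lam).
  assert (Hf : forall x s, 0 < s -> derivable_pt_lim (f x) s (f' x s)).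
  { intros x s Hs. unfold f, f'.
    replace (- Delta (Psi (logu s)) x + F (phi (s / lam)) / lam)
      with (- Delta (Psi (logu s)) x - (- F (phi (s / lam)) / lam)) by (field; lra).
    apply (derivable_pt_lim_minus (fun s => - Delta (logu s) x)).
    - apply (derivable_pt_lim_opp (fun s => Delta (logu s) x)).
      apply derivable_pt_lim_Lap. intros y. apply derivable_pt_lim_logu, Hs.
    - apply derivable_pt_lim_phi_scaled; lra. }
  destruct (first_zero_crossing enum f T x0) as (m & xs & Hm & _ & Hzero & Hle & Hbelow).
  - intros x s _ Hs. exact (derivable_pt_lim_continuity_pt _ _ _ (Hf x s Hs)).
  - destruct (li_yau_scaled_near0 lam Hlam) as [d [Hd H]].
    exists d; split; [exact Hd|]. intros i t Hi Ht. unfold f. pose proof (H i t Hi Ht). lra.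
  - apply in_enum.
  - exact HT0.
  - unfold f; lra.
  - assert (Hder : 0 <= f' xs m).
    { apply (derivable_pt_lim_ge0_left (f xs) m _ m (Hf xs m Hm) Hm).
      intros s Hs. rewrite Hzero. apply Hbelow; [apply in_enum| lra]. }
    assert (Hphim : 0 < phi (m / lam))
      by (destruct Hphi as (Hp & _); apply Hp, Rdiv_lt_0_compat; lra).
    assert (Htouch : - Delta (logu m) xs = phi (m / lam)) by (unfold f in Hzero; lra).
    pose proof (HCD xs (logu m)) as Hcd. rewrite Htouch in Hcd.
    specialize (Hcd Hphim).
    assert (HCDm : F (phi (m / lam)) <= Delta (Psi (logu m)) xs).
    { apply Hcd. intros y _. pose proof (Hle y (in_enum y)). unfold f in *. lra. }
    pose proof (F_gt0 _ Hphim) as HFp. unfold f' in Hder.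
    assert (F (phi (m / lam)) / lam < F (phi (m / lam))); [|lra].
    apply Rmult_lt_reg_r with lam; [lra|].
    unfold Rdiv. rewrite Rmult_assoc, Rinv_l by lra. nra.
Qed.

Lemma li_yau t x : 0 < t -> - Delta (logu t) x <= phi t.
Proof.
  intros Ht. apply Rnot_lt_le. intro Hc.
  destruct (continuity_pt_locally _ _ (phi_continuity_pt t Ht) (- Delta (logu t) x - phi t)
    ltac:(lra)) as [d [Hd H]].
  set (lam := (2 * t + d) / (2 * t)).
  assert (Hlam : 1 < lam).
  { unfold lam. apply Rmult_lt_reg_r with (2 * t); [lra|]. field_simplify; lra. }
  pose proof (li_yau_scaled lam Hlam t x Ht) as HL.
  set (h := - (t * d) / (2 * t + d)).
  assert (Hh : t / lam = t + h) by (unfold lam, h; field; lra).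
  assert (Hh2 : Rabs h < d).
  { assert (0 < t * d / (2 * t + d)) by (apply Rdiv_lt_0_compat; nra).
    unfold h. rewrite Rabs_left.
    - apply Rmult_lt_reg_r with (2 * t + d); [lra|]. field_simplify; nra.
    - unfold Rdiv in *. lra. }
  specialize (H h Hh2). rewrite <- Hh in H. apply Rabs_def2 in H. lra.
Qed.

Lemma Psi_logu_phi_ge t x : 0 < t ->
  / mu x * sumV enum (fun z => w x z * Upsilon (logu t z - logu t x)) <= Psi (logu t) x + phi t.
Proof.
  intros Ht. rewrite PsiH_Upsilon'E. pose proof (li_yau t x Ht). lra.
Qed.

Definition Phi s := RInt phi 1 s.

Lemma ex_RInt_phi a b : 0 < a -> 0 < b -> ex_RInt phi a b.
Proof.
  intros Ha Hb. apply (@ex_RInt_continuous R_CompleteNormedModule). intros z Hz.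
  apply continuity_pt_filterlim, phi_continuity_pt.
  assert (0 < Rmin a b) by (apply Rmin_glb_lt; assumption). lra.
Qed.

Lemma derivable_pt_lim_Phi s : 0 < s -> derivable_pt_lim Phi s (phi s).
Proof.
  intros Hs. apply is_derive_Reals.
  apply (@is_derive_RInt R_CompleteNormedModule phi (fun b => RInt phi 1 b) 1 s).
  - exists (mkposreal (s / 2) ltac:(lra)). intros b Hb.
    apply RInt_correct, ex_RInt_phi; [lra|].
    unfold ball in Hb; simpl in Hb; unfold AbsRing_ball, abs, minus, plus, opp in Hb; simpl in Hb.
    apply Rabs_def2 in Hb. lra.
  - apply continuity_pt_filterlim, phi_continuity_pt, Hs.
Qed.

Lemma RiemannInt_phiE t1 t2 (pr : Riemann_integrable phi t1 t2) :
  0 < t1 -> 0 < t2 -> RiemannInt pr = Phi t2 - Phi t1.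
Proof.
  intros H1 H2. symmetry. rewrite <- RInt_Reals. unfold Phi.
  rewrite <- (RInt_Chasles phi 1 t1 t2) by (apply ex_RInt_phi; lra).
  unfold plus; simpl. ring.
Qed.

Definition G s x := logu s x + Phi s.

Lemma derivable_pt_lim_G s x : 0 < s ->
  derivable_pt_lim (fun r => G r x) s (Psi (logu s) x + phi s).
Proof.
  intros Hs. apply (derivable_pt_lim_plus (fun r => logu r x) Phi).
  - apply derivable_pt_lim_logu, Hs.
  - apply derivable_pt_lim_Phi, Hs.
Qed.

Lemma derive_G_ge0 s x : 0 < s -> 0 <= Psi (logu s) x + phi s.
Proof.
  intros Hs. eapply Rle_trans; [|apply Psi_logu_phi_ge, Hs].
  apply Rmult_le_pos; [left; apply Rinv_0_lt_compat, mu_gt0|].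
  apply sumV_ge0. intros z. apply Rmult_le_pos; [apply w_ge0| apply Upsilon_ge0].
Qed.

Lemma derive_G_ge_edge s x y : 0 < s -> adj w x y ->
  w_min enum w / mu_max enum mu * Upsilon (G s y - G s x) <= Psi (logu s) x + phi s.
Proof.
  intros Hs Hw. eapply Rle_trans; [|apply Psi_logu_phi_ge, Hs].
  replace (G s y - G s x) with (logu s y - logu s x) by (unfold G; ring).
  set (U := logu s y - logu s x).
  assert (HU := Upsilon_ge0 U).
  assert (Hterm : w x y * Upsilon U <= sumV enum (fun z => w x z * Upsilon (logu s z - logu s x))).
  { apply (sumV_ge_term enum (fun z => w x z * Upsilon (logu s z - logu s x))); [|apply in_enum].
    intros z. apply Rmult_le_pos; [apply w_ge0| apply Upsilon_ge0]. }
  assert (Hratio : w_min enum w / mu_max enum mu <= w x y / mu x).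
  { pose proof (mu_gt0 x). pose proof (w_min_gt0 enum w).
    pose proof (w_min_le enum w x y (in_enum x) (in_enum y) Hw).
    pose proof (mu_le_mu_max enum mu x (in_enum x)).
    apply Rle_trans with (w_min enum w / mu x).
    - unfold Rdiv. apply Rmult_le_compat_l; [lra| apply Rinv_le_contravar; lra].
    - unfold Rdiv. apply Rmult_le_compat_r; [left; apply Rinv_0_lt_compat|]; lra. }
  assert (Hinv : 0 < / mu x) by apply Rinv_0_lt_compat, mu_gt0.
  apply Rle_trans with (w x y / mu x * Upsilon U); [apply Rmult_le_compat_r; assumption|].
  unfold Rdiv. rewrite (Rmult_comm (w x y)), Rmult_assoc.
  apply Rmult_le_compat_l; [lra| exact Hterm].
Qed.

Lemma G_nondecreasing x a b : 0 < a <= b -> G a x <= G b x.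
Proof.
  intros Hab. apply (nondecreasing_derive_ge0 (fun r => G r x) (fun r => Psi (logu r) x + phi r)).
  - lra.
  - intros c Hc. apply derivable_pt_lim_G. lra.
  - intros c Hc. apply derive_G_ge0. lra.
Qed.

Lemma G_edge_bound x z a b : adj w x z -> 0 < a < b ->
  G a x - G b z <= 2 * mu_max enum mu / w_min enum w / (b - a).
Proof.
  intros Hxz Hab.
  assert (Hzx : adj w z x) by (unfold adj; destruct Hg as (_ & _ & Hsym & _); rewrite Hsym; exact Hxz).
  pose proof (mu_max_gt0 x). pose proof (w_min_gt0 enum w).
  set (k := w_min enum w / (2 * mu_max enum mu)).
  assert (Hk : 0 < k) by (apply Rdiv_lt_0_compat; lra).
  replace (2 * mu_max enum mu / w_min enum w / (b - a)) with (/ (k * (b - a)))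
    by (unfold k; field; lra).
  apply (riccati_decay (fun s => G a x - G s z) (fun s => - (Psi (logu s) z + phi s))); [exact Hk| lra| | |].
  - intros s Hs. cbv beta.
    replace (- (Psi (logu s) z + phi s)) with (0 - (Psi (logu s) z + phi s)) by ring.
    apply (derivable_pt_lim_minus (fun _ => G a x) (fun s => G s z)).
    + apply derivable_pt_lim_const.
    + apply derivable_pt_lim_G. lra.
  - intros s Hs. pose proof (derive_G_ge0 s z ltac:(lra)). lra.
  - intros s Hs Hh. rewrite Ropp_involutive.
    eapply Rle_trans; [|apply derive_G_ge_edge; [lra| exact Hzx]].
    pose proof (G_nondecreasing x a s ltac:(lra)).
    assert (Hup : (G a x - G s z) ^ 2 / 2 <= Upsilon (G s x - G s z)).
    { eapply Rle_trans; [apply sqr_half_le_Upsilon; lra| apply Upsilon_le; lra]. }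
    replace (k * (G a x - G s z) ^ 2)
      with (w_min enum w / mu_max enum mu * ((G a x - G s z) ^ 2 / 2)) by (unfold k; field; lra).
    apply Rmult_le_compat_l; [left; apply Rdiv_lt_0_compat|]; assumption.
Qed.

Lemma log_harnack t1 t2 x1 x2 d (pr : Riemann_integrable phi t1 t2) :
  0 < t1 < t2 -> walk w x1 x2 d ->
  ln (u t1 x1) <= ln (u t2 x2) + RiemannInt pr
                  + 2 * mu_max enum mu * INR d ^ 2 / (w_min enum w * (t2 - t1)).
Proof.
  intros Ht Hwalk.
  pose proof (walk_increment_bound w G (2 * mu_max enum mu / w_min enum w)
    G_nondecreasing G_edge_bound d x1 x2 Hwalk t1 t2 Ht) as Hbound.
  rewrite (RiemannInt_phiE t1 t2 pr) by lra.
  replace (2 * mu_max enum mu * INR d ^ 2 / (w_min enum w * (t2 - t1)))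
    with (2 * mu_max enum mu / w_min enum w * INR d ^ 2 / (t2 - t1))
    by (pose proof (w_min_gt0 enum w); field; lra).
  unfold G, logu in Hbound. lra.
Qed.

End LogHeat.

Theorem theorem1p2 (V : Type) (enum : list V) (w : V -> V -> R) (mu : V -> R)
  (F phi : R -> R) (u : R -> V -> R) :
  weighted_graph enum w mu ->
  connected w ->
  CD_function F ->
  CD0 enum w mu F ->
  relaxation_function F phi ->
  heat_solution enum w mu u ->
  (forall t x, 0 <= t -> 0 < u t x) ->
  forall (t1 t2 : R) (x1 x2 : V) (d : nat) (pr : Riemann_integrable phi t1 t2),
    0 < t1 -> t1 < t2 ->
    is_dist w x1 x2 d ->
    u t1 x1 <= u t2 x2 * exp (RiemannInt pr)
               * exp (2 * mu_max enum mu * (INR d) ^ 2 / (w_min enum w * (t2 - t1))).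
Proof.
  intros Hg _ HF HCD Hphi Hheat Hpos t1 t2 x1 x2 d pr Ht1 Ht12 [Hwalk _].
  pose proof (log_harnack V enum w mu F phi u Hg HF HCD Hphi Hheat Hpos
    t1 t2 x1 x2 d pr ltac:(lra) Hwalk) as Hlog.
  rewrite <- (exp_ln (u t1 x1)), <- (exp_ln (u t2 x2)) at 1 by (apply Hpos; lra).
  rewrite <- !exp_plus.
  destruct (Rle_lt_or_eq_dec _ _ Hlog) as [Hlt|Heq].
  - left; apply exp_increasing, Hlt.
  - right; rewrite Heq; reflexivity.
Qed.
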